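(* Let $1<a<b$ be coprime integers and let $D\subseteq G$ be a subdiagram. Then \[ Q(\mathbf{1}_D)=|D|-\#\{(i,j)\in D\times U_D:\ i\to j\}. \]
   Context: Fix coprime integers $1<a<b$. Work in the grid $\mathbb{Z}^2$ ($+x$ east, $+y$ north). Let $g:\mathbb{Z}^2\to\mathbb{Z}$, $g(x,y)=ab-ax-by$, and $G=\{(x,y)\in\mathbb{Z}_{\ge1}^2: g(x,y)>0\}$. A subdiagram is a subset $D\subseteq G$ such that whenever $(x,y)\in D$, $(x',y')\in G$, $x'\le x$, $y'\le y$, we have $(x',y')\in D$. $\mathbf{1}_D\in\mathbb{R}^G$ is the indicator vector of $D$. $K(d)=\mathbf{1}_{d\ge0}-\mathbf{1}_{d\ge a}-\mathbf{1}_{d\ge b}+\mathbf{1}_{d\ge a+b}$, and $Q(\mathbf{n})=\sum_{i,j\in G}K(g(j)-g(i))\,n_in_j$ for $\mathbf{n}\in\mathbb{R}^G$. For cells $i,j\in\mathbb{Z}^2$, write $i\to j$ iff $0\le g(j)-g(i)<a$. For a subdiagram $D$, define \[ U_D=\{(x,y)\in\mathbb{Z}^2:\ (x,y)\notin D\ \text{and}\ (x,y-1)\in D\cup(\mathbb{Z}_{\ge1}\times\mathbb{Z}_{\le0})\}. \] *)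

From Stdlib Require Import ZArith List Lia.
Import ListNotations.
Open Scope Z_scope.

(* Cells of the grid Z^2: (x, y), +x east, +y north. *)
Definition cell : Type := (Z * Z)%type.

Definition g (a b : Z) (c : cell) : Z := a * b - a * fst c - b * snd c.

Definition inG (a b : Z) (c : cell) : Prop :=
  1 <= fst c /\ 1 <= snd c /\ 0 < g a b c.

Definition inGb (a b : Z) (c : cell) : bool :=
  (1 <=? fst c) && (1 <=? snd c) && (0 <? g a b c).

(* Duplicate-free enumeration of G: G lies in the box [1,b] x [1,a]
   (indeed ax < ab and by < ab there), filtered by the defining condition. *)
Definition zrange (lo n : Z) : list Z :=
  map (fun k => lo + Z.of_nat k) (seq 0 (Z.to_nat n)).

Definition Gcells (a b : Z) : list cell :=
  filter (inGb a b) (list_prod (zrange 1 b) (zrange 1 a)).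

Definition subdiagram (a b : Z) (D : cell -> bool) : Prop :=
  (forall c, D c = true -> inG a b c) /\
  (forall c c', D c = true -> inG a b c' ->
     fst c' <= fst c -> snd c' <= snd c -> D c' = true).

Definition indicator (D : cell -> bool) (c : cell) : Z := if D c then 1 else 0.

Definition cardD (a b : Z) (D : cell -> bool) : nat :=
  length (filter D (Gcells a b)).

Definition ind (P : bool) : Z := if P then 1 else 0.

Definition K (a b d : Z) : Z :=
  ind (0 <=? d) - ind (a <=? d) - ind (b <=? d) + ind (a + b <=? d).

Definition sumZ {T} (f : T -> Z) (l : list T) : Z :=
  fold_right (fun t acc => f t + acc) 0 l.

Definition Q (a b : Z) (n : cell -> Z) : Z :=
  sumZ (fun i => sumZ (fun j => K a b (g a b j - g a b i) * n i * n j) (Gcells a b))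
       (Gcells a b).

Definition arrow (a b : Z) (i j : cell) : Prop :=
  0 <= g a b j - g a b i < a.

Definition strip (c : cell) : Prop := 1 <= fst c /\ snd c <= 0.

(* U_D: cells directly above the top of each column of D ∪ strip. *)
Definition inU (D : cell -> bool) (c : cell) : Prop :=
  ~ (D c = true \/ strip c) /\
  (D (fst c, snd c - 1) = true \/ strip (fst c, snd c - 1)).

(** Expanding the indicator vector, Q(1_D) is a sum over i in D of
    #{j in D : i -> j} - #{j in D : 0 <= g(j) - g(i) - b < a}, since
    K(d) = 1_{0<=d<a} - 1_{b<=d<a+b}.  Shifting the second set one
    cell north (g drops by b) turns it into #{j : south j in D, i -> j}.  Within
    a column of G, [j in D] - [south j in D] + [j in U_D] equals
    [j lies in row 1], and along row 1 of G the values of g form an arithmetic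
    progression of step a reaching down below a, so exactly one cell of row 1
    satisfies i -> j; hence each i in D contributes
    1 - #{j in U_D : i -> j}. *)

From Stdlib Require Import ZArith List Lia Permutation FinFun.
Import ListNotations.
Open Scope Z_scope. Open Scope bool_scope.

Lemma sumZ_app {T} (f : T -> Z) l1 l2 : sumZ f (l1 ++ l2) = sumZ f l1 + sumZ f l2.
Proof. induction l1; simpl; lia. Qed.

Lemma sumZ_map {T U} (f : U -> Z) (h : T -> U) l :
  sumZ f (map h l) = sumZ (fun x => f (h x)) l.
Proof. induction l; simpl; congruence. Qed.

Lemma sumZ_ext_in {T} (f h : T -> Z) l :
  (forall x, In x l -> f x = h x) -> sumZ f l = sumZ h l.
Proof. induction l; simpl; intros H; auto. rewrite H, IHl; auto. Qed.

Lemma sumZ_sub {T} (f h : T -> Z) l : sumZ (fun x => f x - h x) l = sumZ f l - sumZ h l.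
Proof. induction l; simpl; lia. Qed.

Lemma sumZ_zero {T} (f : T -> Z) l : (forall x, f x = 0) -> sumZ f l = 0.
Proof. intros H; induction l; simpl; rewrite ?H; lia. Qed.

Lemma sumZ_list_prod {T U} (F : T * U -> Z) l1 l2 :
  sumZ F (list_prod l1 l2) = sumZ (fun i => sumZ (fun j => F (i, j)) l2) l1.
Proof. induction l1; simpl; auto. rewrite sumZ_app, sumZ_map, IHl1; reflexivity. Qed.

Lemma length_filter_sumZ {T} (f : T -> bool) l :
  Z.of_nat (length (filter f l)) = sumZ (fun x => ind (f x)) l.
Proof.
  induction l as [|x l IHl]; [reflexivity|].
  change (sumZ _ (x :: l)) with (ind (f x) + sumZ (fun x => ind (f x)) l).
  cbn [filter]. destruct (f x); cbn [length ind]; rewrite ?Nat2Z.inj_succ; lia.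
Qed.

Lemma sumZ_perm {T} (F : T -> Z) l1 l2 : Permutation l1 l2 -> sumZ F l1 = sumZ F l2.
Proof. induction 1; simpl; lia. Qed.

Lemma sumZ_filter_nonzero {T} (F : T -> Z) l :
  sumZ F l = sumZ F (filter (fun x => negb (F x =? 0)) l).
Proof.
  induction l as [|x l IHl]; simpl; auto.
  destruct (Z.eqb_spec (F x) 0); simpl; lia.
Qed.

Lemma sumZ_eq_on_support {T} (F : T -> Z) l1 l2 : NoDup l1 -> NoDup l2 ->
  (forall x, F x <> 0 -> (In x l1 <-> In x l2)) -> sumZ F l1 = sumZ F l2.
Proof.
  intros N1 N2 H. rewrite (sumZ_filter_nonzero F l1), (sumZ_filter_nonzero F l2).
  apply sumZ_perm, NoDup_Permutation; try apply NoDup_filter; auto.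
  intro x. rewrite !filter_In, Bool.negb_true_iff, Z.eqb_neq.
  split; intros [Hin Hnz]; split; auto; apply (H x Hnz); auto.
Qed.

Lemma NoDup_list_prod {T U} (l1 : list T) (l2 : list U) :
  NoDup l1 -> NoDup l2 -> NoDup (list_prod l1 l2).
Proof.
  intros N1 N2. induction N1 as [|x l1 Hx N1 IH]; simpl; [constructor|].
  apply NoDup_app; auto.
  - apply Injective_map_NoDup; auto. intros u v E; inversion E; auto.
  - intros [p q] Hin Hin'. apply in_map_iff in Hin as [y [E _]]. inversion E; subst.
    apply in_prod_iff in Hin' as [Hp _]. contradiction.
Qed.

Lemma in_zrange lo n k : 0 <= n -> (In k (zrange lo n) <-> lo <= k < lo + n).
Proof.
  intros Hn. unfold zrange. rewrite in_map_iff. split.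
  - intros [m [<- Hm]]. apply in_seq in Hm. lia.
  - intros Hk. exists (Z.to_nat (k - lo)). rewrite in_seq. lia.
Qed.

Lemma NoDup_zrange lo n : NoDup (zrange lo n).
Proof. apply Injective_map_NoDup; [intros u v E; lia | apply seq_NoDup]. Qed.

Lemma inGbP a b c : inGb a b c = true <-> inG a b c.
Proof. unfold inGb, inG. rewrite !Bool.andb_true_iff, !Z.leb_le, Z.ltb_lt. tauto. Qed.

Lemma in_Gcells a b c : 0 < a -> 0 < b -> (In c (Gcells a b) <-> inG a b c).
Proof.
  intros Ha Hb. unfold Gcells. rewrite filter_In, inGbP. split; [tauto|].
  intros H; split; [|exact H]. destruct c as [x y]. unfold inG, g in H; simpl in H.
  apply in_prod_iff. rewrite !in_zrange by lia. nia.
Qed.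

Lemma NoDup_Gcells a b : NoDup (Gcells a b).
Proof. apply NoDup_filter, NoDup_list_prod; apply NoDup_zrange. Qed.

Definition north (c : cell) : cell := (fst c, snd c + 1).
Definition south (c : cell) : cell := (fst c, snd c - 1).

Lemma g_north a b c : g a b (north c) = g a b c - b.
Proof. unfold g, north; simpl; ring. Qed.

Lemma south_north c : south (north c) = c.
Proof. destruct c; unfold south, north; simpl; f_equal; ring. Qed.

Definition stripb (c : cell) : bool := (1 <=? fst c) && (snd c <=? 0).

Definition inUb (D : cell -> bool) (c : cell) : bool :=
  negb (D c || stripb c) && (D (south c) || stripb (south c)).

Definition arrowb a b (i j : cell) : bool :=
  (0 <=? g a b j - g a b i) && (g a b j - g a b i <? a).

Lemma stripbP c : stripb c = true <-> strip c.
Proof. unfold stripb, strip. rewrite Bool.andb_true_iff, !Z.leb_le. tauto. Qed.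

Lemma inUbP D c : inUb D c = true <-> inU D c.
Proof.
  unfold inUb, inU. rewrite Bool.andb_true_iff, Bool.negb_true_iff, !Bool.orb_true_iff.
  rewrite <- !stripbP. unfold south.
  destruct (D c), (stripb c); intuition discriminate.
Qed.

Lemma arrowbP a b i j : arrowb a b i j = true <-> arrow a b i j.
Proof. unfold arrowb, arrow. rewrite Bool.andb_true_iff, Z.leb_le, Z.ltb_lt. tauto. Qed.

Lemma K_as_arrows a b i j : 0 <= a ->
  K a b (g a b j - g a b i) = ind (arrowb a b i j) - ind (arrowb a b i (north j)).
Proof.
  intros Ha. unfold K, arrowb. rewrite g_north.
  destruct (Z.leb_spec 0 (g a b j - g a b i)), (Z.leb_spec a (g a b j - g a b i)),
    (Z.leb_spec b (g a b j - g a b i)), (Z.leb_spec (a + b) (g a b j - g a b i)),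
    (Z.ltb_spec (g a b j - g a b i) a), (Z.leb_spec 0 (g a b j - b - g a b i)),
    (Z.ltb_spec (g a b j - b - g a b i) a); simpl; lia.
Qed.

Lemma arrow_row1_exists a b i : 1 < a -> a < b -> inG a b i ->
  exists j, inG a b j /\ snd j = 1 /\ arrow a b i j.
Proof.
  intros Ha Hab Hi. destruct i as [xi yi]. unfold inG, g in Hi; simpl in Hi.
  pose proof (Z.div_mod (b * (yi - 1)) a ltac:(lia)).
  pose proof (Z.mod_pos_bound (b * (yi - 1)) a ltac:(lia)).
  assert (0 <= b * (yi - 1) / a) by (apply Z.div_pos; nia).
  exists (xi + b * (yi - 1) / a, 1). unfold inG, arrow, g; simpl. nia.
Qed.

Lemma arrow_row1_unique a b i j j' : 0 < a ->
  snd j = 1 -> snd j' = 1 -> arrow a b i j -> arrow a b i j' -> j = j'.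
Proof.
  intros Ha. destruct j as [x y], j' as [x' y']; simpl; intros -> -> Hj Hj'.
  unfold arrow, g in Hj, Hj'; simpl in Hj, Hj'.
  assert (a * (x - x') < a /\ a * (x' - x) < a) as [H1 H2] by lia.
  f_equal. nia.
Qed.

Lemma sum_arrow_row1 a b i : 1 < a -> a < b -> inG a b i ->
  sumZ (fun j => ind (arrowb a b i j && (snd j =? 1))) (Gcells a b) = 1.
Proof.
  intros Ha Hab Hi.
  destruct (arrow_row1_exists a b i Ha Hab Hi) as [j0 [Hj0 [Hrow Harr]]].
  rewrite (sumZ_eq_on_support _ _ [j0]); [|apply NoDup_Gcells|repeat constructor; auto|].
  - simpl. apply arrowbP in Harr. rewrite Harr, Hrow. reflexivity.
  - intros j Hnz. unfold ind in Hnz.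
    destruct (arrowb a b i j) eqn:Hij, (Z.eqb_spec (snd j) 1); simpl in Hnz; try lia.
    apply arrowbP in Hij. rewrite in_Gcells by lia. simpl.
    assert (j0 = j) by (apply (arrow_row1_unique a b i); auto; lia). subst j0.
    tauto.
Qed.

Lemma column_telescope a b D j : 0 < b -> subdiagram a b D -> inG a b j ->
  ind (D j) - ind (D (south j)) + ind (inUb D j) = ind (snd j =? 1).
Proof.
  intros Hb [HD Hdown] Hj.
  assert (Hs : D j = true -> snd j <> 1 -> D (south j) = true).
  { intros Dj Hy. apply (Hdown j); auto; unfold south; simpl; try lia.
    destruct j as [x y]; unfold inG, g in *; simpl in *; lia. }
  assert (Hs' : D (south j) = true -> snd j >= 2).
  { intros Ds. apply HD in Ds. unfold inG, south in Ds; simpl in Ds; lia. }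
  unfold inUb, stripb, south in *. destruct j as [x y]; unfold inG in Hj; simpl in *.
  replace (1 <=? x) with true by (symmetry; apply Z.leb_le; lia).
  replace (y <=? 0) with false by (symmetry; apply Z.leb_gt; lia).
  destruct (D (x, y)), (D (x, y - 1)), (Z.eqb_spec y 1), (Z.leb_spec (y - 1) 0);
    simpl; unfold ind; try lia; try (specialize (Hs eq_refl); lia);
    specialize (Hs' eq_refl); lia.
Qed.

Lemma sum_north_shift a b D i : 0 < a < b -> subdiagram a b D -> inG a b i ->
  sumZ (fun j => ind (D j && arrowb a b i (north j))) (Gcells a b)
  = sumZ (fun j => ind (D (south j) && arrowb a b i j)) (Gcells a b).
Proof.
  intros Hab [HD _] Hi.
  transitivity (sumZ (fun j => ind (D (south j) && arrowb a b i j)) (map north (Gcells a b))).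
  { rewrite sumZ_map. apply sumZ_ext_in. intros j _. rewrite south_north. reflexivity. }
  apply sumZ_eq_on_support.
  - apply Injective_map_NoDup; [|apply NoDup_Gcells].
    intros u v E. rewrite <- (south_north u), <- (south_north v), E. reflexivity.
  - apply NoDup_Gcells.
  - intros j Hnz. unfold ind in Hnz.
    destruct (D (south j)) eqn:Ds, (arrowb a b i j) eqn:Hij; simpl in Hnz; try lia.
    apply HD in Ds. apply arrowbP in Hij. rewrite in_map_iff, !in_Gcells by lia.
    destruct j as [x y]; unfold inG, arrow, south, g in *; simpl in *.
    split; intros _; [|exists (x, y - 1); rewrite in_Gcells by lia]; unfold north, inG, g; simpl.
    + lia.
    + split; [f_equal; ring | lia].
Qed.

Lemma row_contribution a b D i : 1 < a -> a < b -> subdiagram a b D -> D i = true ->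
  sumZ (fun j => K a b (g a b j - g a b i) * indicator D i * indicator D j) (Gcells a b)
  = 1 - sumZ (fun j => ind (D i && inUb D j && arrowb a b i j)) (Gcells a b).
Proof.
  intros Ha Hab Hsub HDi.
  assert (Hi : inG a b i) by (apply (proj1 Hsub); auto).
  rewrite (sumZ_ext_in _ (fun j => ind (D j && arrowb a b i j)
                                  - ind (D j && arrowb a b i (north j)))).
  2:{ intros j _. unfold indicator. rewrite HDi, K_as_arrows by lia.
      destruct (D j); simpl; ring. }
  rewrite sumZ_sub, sum_north_shift by (auto; lia).
  rewrite <- (sum_arrow_row1 a b i) by auto. rewrite <- !sumZ_sub.
  apply sumZ_ext_in. intros j Hj. apply in_Gcells in Hj; [|lia|lia].
  pose proof (column_telescope a b D j ltac:(lia) Hsub Hj) as Hcol. rewrite HDi.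
  destruct (arrowb a b i j), (D j), (D (south j)), (inUb D j), (snd j =? 1);
    simpl in *; lia.
Qed.

Lemma arrow_into_U_inG a b D i j : subdiagram a b D -> D i = true ->
  inU D j -> arrow a b i j -> inG a b j.
Proof.
  intros [HD _] HDi [HnotDS HbelowDS] Harr. apply HD in HDi.
  assert (1 <= fst j).
  { destruct HbelowDS as [Hd | Hst]; [apply HD in Hd|]; unfold inG, strip in *; simpl in *; lia. }
  assert (1 <= snd j).
  { destruct (Z.le_gt_cases 1 (snd j)); auto. exfalso. apply HnotDS. right. unfold strip; lia. }
  unfold inG, arrow in *. lia.
Qed.

Theorem lemma3p1 (a b : Z) (D : cell -> bool) :
  1 < a -> a < b -> Z.gcd a b = 1 -> subdiagram a b D ->
  exists l : list (cell * cell),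
    NoDup l /\
    (forall p : cell * cell,
        In p l <-> (D (fst p) = true /\ inU D (snd p) /\ arrow a b (fst p) (snd p))) /\
    Q a b (indicator D) = Z.of_nat (cardD a b D) - Z.of_nat (length l).
Proof.
  intros Ha Hab _ Hsub.
  set (P := fun p : cell * cell => D (fst p) && inUb D (snd p) && arrowb a b (fst p) (snd p)).
  exists (filter P (list_prod (Gcells a b) (Gcells a b))). split; [|split].
  - apply NoDup_filter, NoDup_list_prod; apply NoDup_Gcells.
  - intros [i j]. unfold P; simpl.
    rewrite filter_In, in_prod_iff, !in_Gcells, !Bool.andb_true_iff, inUbP, arrowbP by lia.
    split; [tauto|]. intros (HDi & HU & Harr).
    pose proof (proj1 Hsub i HDi). pose proof (arrow_into_U_inG a b D i j Hsub HDi HU Harr).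
    tauto.
  - unfold cardD, Q. rewrite !length_filter_sumZ, sumZ_list_prod, <- sumZ_sub.
    apply sumZ_ext_in. intros i _. unfold P; simpl.
    destruct (D i) eqn:HDi.
    + rewrite row_contribution by auto. rewrite HDi. reflexivity.
    + rewrite !sumZ_zero; [reflexivity| |];
        intros; unfold indicator; rewrite ?HDi; simpl; ring.
Qed.
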